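(* Let $\mathcal{R}$ be a commutative, associative real algebra with unit, $A\in M^{\infty\times\infty}_0(\mathcal{R})$ and $g\in\mathcal{R}^\infty_0[t]$. Consider the differential equation $\frac{df}{dt}=Af+g$ for $f\in\mathcal{R}^\infty_0[t]$. (i) If $A-I$ is strictly upper triangular, the equation has a unique solution, and its coefficients depend $\mathcal{R}$-linearly on the coefficients of $g$. (ii) If $A$ is strictly upper triangular, a solution is uniquely determined by its degree-zero term $f_0\in\mathcal{R}^\infty_0$; in fact the solution depends $\mathcal{R}$-linearly on $f_0$ and the coefficients of $g$.
   Context: $\mathcal{R}^\infty_0$ denotes finitely supported sequences in $\mathcal{R}$ indexed by positive integers; $M^{\infty\times\infty}_0(\mathcal{R})$ denotes infinite matrices indexed by positive integers each of whose columns has finitely many nonzero entries; $\mathcal{R}^\infty_0[t]$ denotes polynomials in $t$ with coefficients in $\mathcal{R}^\infty_0$. *)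

From HB Require Import structures.
From mathcomp Require Import all_boot all_order all_algebra.
From mathcomp Require Import reals.
Set Implicit Arguments. Unset Strict Implicit. Unset Printing Implicit Defensive.
Import Order.TTheory GRing.Theory Num.Theory.
Local Open Scope ring_scope.

Section Defs.
Variable R : nzRingType.

Definition ventry (v : seq R) (i : nat) : R := nth 0 v i.

(* coefficient of t^k, index i *)
Definition coef (f : seq (seq R)) (k i : nat) : R := ventry (nth [::] f k) i.

(* M^{oo x oo}_0(R): every column has finitely many nonzero entries *)
Definition col_finite (A : nat -> nat -> R) : Prop :=
  forall j, exists N, forall i, (N <= i)%N -> A i j = 0.

Definition strictly_upper (A : nat -> nat -> R) : Prop :=
  forall i j, (j <= i)%N -> A i j = 0.

Definition unipotent_upper (A : nat -> nat -> R) : Prop :=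
  strictly_upper (fun i j => A i j - (i == j)%:R).

(* i-th entry of the matrix-vector product A v (a finite sum, v having finite
   support contained in [0, size v)) *)
Definition mulmv (A : nat -> nat -> R) (v : seq R) (i : nat) : R :=
  \sum_(j < size v) A i j * ventry v j.

(* f solves  df/dt = A f + g , compared coefficient of t^k by coefficient:
   (k+1) f_{k+1} = A f_k + g_k *)
Definition solves (A : nat -> nat -> R) (g f : seq (seq R)) : Prop :=
  forall k i, k.+1%:R * coef f k.+1 i = mulmv A (nth [::] f k) i + coef g k i.

Definition peq (f1 f2 : seq (seq R)) : Prop := forall k i, coef f1 k i = coef f2 k i.

End Defs.

(* For (i), write A = 1 + N with N strictly upper triangular: back substitution
   inverts A on finitely supported vectors, so the coefficient relation
   (k+1) f_(k+1) = A f_k + g_k determines f_k from f_(k+1) and g_k.  Starting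
   from f_k = 0 above the degree of g this builds a solution, by induction on g;
   and for two solutions the difference d satisfies A d_k = (k+1) d_(k+1),
   which vanishes for large k and then, descending, for every k.
   For (ii) the same relation determines f_(k+1) from f_k.  The recursion keeps
   the support of f_k below a fixed bound, and once g is exhausted every step
   applies the strictly upper triangular A, which lowers that bound by one; so
   the recursion stops and defines a polynomial.
   In both cases linearity follows from uniqueness, since a linear combination
   of solutions solves the correspondingly combined equation. *)

From Stdlib Require Import ClassicalEpsilon.
From HB Require Import structures.
From mathcomp Require Import all_boot all_order all_algebra.
From mathcomp Require Import reals.
From mathcomp Require Import ring zify.
Set Implicit Arguments. Unset Strict Implicit. Unset Printing Implicit Defensive.
Import Order.TTheory GRing.Theory Num.Theory.
Local Open Scope ring_scope.

Lemma descending_ind (P : nat -> Prop) (n : nat) :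
  (forall k, (n <= k)%N -> P k) -> (forall k, P k.+1 -> P k) -> forall k, P k.
Proof.
move=> Pn PS; suff Pm m k : (n <= k + m)%N -> P k.
  by move=> k; apply: (Pm n); rewrite leq_addl.
elim: m k => [|m IHm] k; first by rewrite addn0; apply: Pn.
by rewrite -addSnnS => /IHm /PS.
Qed.

Section FiniteSupport.
Variable R : nzRingType.
Implicit Types (f : seq (seq R)) (v : seq R).

Lemma sum_ord_widen (n m : nat) (F : nat -> R) :
  (n <= m)%N -> (forall j, (n <= j < m)%N -> F j = 0) ->
  \sum_(j < n) F j = \sum_(j < m) F j.
Proof.
move=> le_nm F0; rewrite -!(big_mkord xpredT F) (big_cat_nat (leq0n n) le_nm) /=.
by rewrite [X in _ = _ + X]big1_seq ?addr0 // => j; rewrite mem_index_iota => /F0.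
Qed.

Definition width f : nat := \max_(v <- f) size v.

Lemma size_nth_width f k : (size (nth [::] f k) <= width f)%N.
Proof.
case: (ltnP k (size f)) => [lt_kf | ge_kf]; last by rewrite nth_default.
by rewrite (leq_bigmax_seq _ (mem_nth [::] lt_kf)).
Qed.

Lemma coef_ge_width f k i : (width f <= i)%N -> coef f k i = 0.
Proof.
by move=> le_wi; rewrite /coef /ventry nth_default ?(leq_trans (size_nth_width f k)).
Qed.

Lemma coef_ge_size f k i : (size f <= k)%N -> coef f k i = 0.
Proof. by move=> le_fk; rewrite /coef nth_default // /ventry nth_nil. Qed.

Definition seq_of_coef (F : nat -> nat -> R) (d n : nat) : seq (seq R) :=
  mkseq (fun k => mkseq (F k) n) d.

Lemma coef_seq_of_coef (F : nat -> nat -> R) d n :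
  (forall k i, (d <= k)%N -> F k i = 0) -> (forall k i, (n <= i)%N -> F k i = 0) ->
  forall k i, coef (seq_of_coef F d n) k i = F k i.
Proof.
move=> Fd Fn k i; rewrite /coef /ventry /seq_of_coef.
have [lt_kd | ge_kd] := ltnP k d.
  rewrite nth_mkseq //; have [lt_in | ge_in] := ltnP i n; first by rewrite nth_mkseq.
  by rewrite nth_default ?size_mkseq ?Fn.
by rewrite (nth_default [::]) ?size_mkseq // nth_nil Fd.
Qed.

Lemma mulmv_sum (A : nat -> nat -> R) v (u : nat -> R) n i :
  ventry v =1 u -> (forall j, (n <= j)%N -> u j = 0) ->
  mulmv A v i = \sum_(j < n) A i j * u j.
Proof.
move=> vu u0; rewrite /mulmv; set m := maxn (size v) n.
rewrite (@sum_ord_widen _ m (fun j => A i j * ventry v j) (leq_maxl _ _)); last first.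
  by move=> j /andP[le_vj _]; rewrite /ventry nth_default ?mulr0.
rewrite (@sum_ord_widen _ m (fun j => A i j * u j) (leq_maxr _ _)); last first.
  by move=> j /andP[le_nj _]; rewrite u0 ?mulr0.
by apply: eq_bigr => j _; rewrite vu.
Qed.

Lemma mulmv_sum_width (A : nat -> nat -> R) f k n i :
  (width f <= n)%N -> mulmv A (nth [::] f k) i = \sum_(j < n) A i j * coef f k j.
Proof.
by move=> le_wn; apply: mulmv_sum => // j le_nj; rewrite coef_ge_width ?(leq_trans le_wn).
Qed.

End FiniteSupport.

Section Unitriangular.
Variables (R : nzRingType) (A : nat -> nat -> R).
Hypothesis A_unip : unipotent_upper A.

Lemma unipotent_diag n : A n n = 1.
Proof. by apply/eqP; rewrite -subr_eq0; have := A_unip (leqnn n); rewrite /= eqxx => ->. Qed.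

Lemma unipotent_lower i j : (j < i)%N -> A i j = 0.
Proof. by move=> lt_ji; have := A_unip (ltnW lt_ji); rewrite /= gtn_eqF // subr0. Qed.

Lemma unipotent_sum_eq0 n (x : nat -> R) :
  (forall j, (n <= j)%N -> x j = 0) ->
  (forall i, \sum_(j < n) A i j * x j = 0) -> forall j, x j = 0.
Proof.
elim: n x => [|n IHn] x x0 Ax0; first by move=> j; apply: x0.
have xn0 : x n = 0.
  have := Ax0 n; rewrite big_ord_recr /= unipotent_diag mul1r big1 ?add0r //.
  by move=> j _; rewrite unipotent_lower ?mul0r.
apply: IHn => [j | i]; first by rewrite leq_eqVlt => /orP[/eqP<- | /x0].
by have := Ax0 i; rewrite big_ord_recr /= xn0 mulr0 addr0.
Qed.

Lemma unipotent_sum_solvable n (w : nat -> R) :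
  (forall i, (n <= i)%N -> w i = 0) ->
  exists2 x : nat -> R, forall j, (n <= j)%N -> x j = 0
                      & forall i, \sum_(j < n) A i j * x j = w i.
Proof.
elim: n w => [|n IHn] w w0.
  by exists (fun=> 0) => // i; rewrite big_ord0 w0.
pose w' i := w i - A i n * w n.
have w'0 i : (n <= i)%N -> w' i = 0.
  rewrite leq_eqVlt => /orP[/eqP<- | lt_ni]; first by rewrite /w' unipotent_diag mul1r subrr.
  by rewrite /w' unipotent_lower // mul0r subr0 w0.
have [x x0 Ax] := IHn w' w'0.
exists (fun j => if j == n then w n else x j) => [j le_nj | i].
  by rewrite gtn_eqF // x0 // ltnW.
rewrite big_ord_recr /= eqxx (eq_bigr (fun j : 'I_n => A i j * x j)) ?Ax ?subrK //.
by move=> j _; rewrite ltn_eqF.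
Qed.

Lemma unipotent_mulmv_surj n (w : nat -> R) :
  (forall i, (n <= i)%N -> w i = 0) -> exists v : seq R, forall i, mulmv A v i = w i.
Proof.
move=> /unipotent_sum_solvable[x _ Ax]; exists (mkseq x n) => i.
by rewrite /mulmv size_mkseq -Ax; apply: eq_bigr => j _; rewrite /ventry nth_mkseq.
Qed.

End Unitriangular.

(* The offset [s] makes the equation stable under dropping the constant term
   of [g] and [f], which allows induction on [g]; [solves] is the case [s = 0]. *)
Definition solves_from (R : nzRingType) (A : nat -> nat -> R) (s : nat)
    (g f : seq (seq R)) : Prop :=
  forall k i, (s + k).+1%:R * coef f k.+1 i = mulmv A (nth [::] f k) i + coef g k i.

Lemma unipotent_solves_from (R : nzRingType) (A : nat -> nat -> R) :
  unipotent_upper A -> forall g s, exists f, solves_from A s g f.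
Proof.
move=> A_unip; elim=> [|g0 g IHg] s.
  by exists [::] => k i; rewrite /coef /ventry !nth_nil mulr0 /mulmv big_ord0 add0r.
have [f solf] := IHg s.+1.
pose w i := s.+1%:R * coef f 0 i - ventry g0 i.
have w0 i : (maxn (size (nth [::] f 0)) (size g0) <= i)%N -> w i = 0.
  rewrite geq_max => /andP[le_fi le_gi].
  by rewrite /w /coef /ventry (nth_default 0 le_fi) (nth_default 0 le_gi) mulr0 subr0.
have [f0 Af0] := unipotent_mulmv_surj A_unip w0.
exists (f0 :: f) => -[|k] i; first by rewrite addn0 Af0 subrK.
by rewrite /coef /= -addSnnS solf.
Qed.

Lemma solves_sub (R : nzRingType) (A : nat -> nat -> R) g f1 f2 :
  solves A g f1 -> solves A g f2 -> forall k i,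
  k.+1%:R * (coef f1 k.+1 i - coef f2 k.+1 i) =
  \sum_(j < maxn (width f1) (width f2)) A i j * (coef f1 k j - coef f2 k j).
Proof.
move=> sol1 sol2 k i; rewrite mulrBr sol1 sol2 opprD addrACA subrr addr0.
rewrite !(mulmv_sum_width _ _ (n := maxn (width f1) (width f2))) ?leq_maxl ?leq_maxr //.
by rewrite -sumrB; apply: eq_bigr => j _; rewrite mulrBr.
Qed.

Lemma unipotent_solves_uniq (R : nzRingType) (A : nat -> nat -> R) :
  unipotent_upper A ->
  forall g f1 f2, solves A g f1 -> solves A g f2 -> peq f1 f2.
Proof.
move=> A_unip g f1 f2 sol1 sol2.
suff eq12 k i : coef f1 k i - coef f2 k i = 0.
  by move=> k i; apply/eqP; rewrite -subr_eq0 eq12.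
move: k i; apply: (@descending_ind _ (maxn (size f1) (size f2))) => [k | k eq12_next].
  by rewrite geq_max => /andP[le_f1k le_f2k] i; rewrite !coef_ge_size ?subrr.
apply: (unipotent_sum_eq0 A_unip (n := maxn (width f1) (width f2))) => [j | i].
  by rewrite geq_max => /andP[le_f1j le_f2j]; rewrite !coef_ge_width ?subrr.
by rewrite -(solves_sub sol1 sol2) eq12_next mulr0.
Qed.

Lemma natS_mulr_eq0 (K : numFieldType) (R : lalgType K) n (x : R) :
  (n.+1%:R * x == 0) = (x == 0).
Proof. by rewrite mulr_natl -(scaler_nat (R := K)) scaler_eq0 pnatr_eq0. Qed.

Lemma solves_uniq_init (K : numFieldType) (R : lalgType K) (A : nat -> nat -> R) g f1 f2 :
  solves A g f1 -> solves A g f2 -> (forall i, coef f1 0 i = coef f2 0 i) -> peq f1 f2.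
Proof.
move=> sol1 sol2 eq12_0; elim=> [|k IHk] i; first exact: eq12_0.
apply/eqP; rewrite -subr_eq0 -(natS_mulr_eq0 k) (solves_sub sol1 sol2).
by rewrite big1 // => j _; rewrite IHk subrr mulr0.
Qed.

Section Taylor.
Variables (K : numFieldType) (R : lalgType K) (A : nat -> nat -> R).
Hypothesis A_su : strictly_upper A.
Variables (f0 : seq R) (g : seq (seq R)).

Let n := maxn (size f0) (width g).

Fixpoint taylor k : nat -> R :=
  if k is k'.+1 then
    fun i => (k'.+1%:R : K)^-1 *: (\sum_(j < n) A i j * taylor k' j + coef g k' i)
  else ventry f0.

Lemma taylor_ge_width k i : (n <= i)%N -> taylor k i = 0.
Proof.
rewrite geq_max => /andP[le_f0i le_gi].
case: k => [|k] /=; first by rewrite /ventry nth_default.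
rewrite coef_ge_width // addr0 big1 ?scaler0 // => j _.
by rewrite A_su ?mul0r // ltnW // (leq_trans (ltn_ord j)) // geq_max le_f0i.
Qed.

Lemma taylor_nilpotent m k i :
  (size g <= k)%N -> (n <= i + m)%N -> taylor (k + m) i = 0.
Proof.
elim: m k i => [|m IHm] k i le_gk; first by rewrite !addn0; apply: taylor_ge_width.
move=> le_n_im; rewrite addnS /= coef_ge_size ?addr0 ?(leq_trans le_gk (leq_addr _ _)) //.
rewrite big1 ?scaler0 // => j _; have [le_ji | lt_ij] := leqP j i.
  by rewrite A_su ?mul0r.
by rewrite IHm ?mulr0 //; lia.
Qed.

Lemma taylor_ge_deg k i : (size g + n <= k)%N -> taylor k i = 0.
Proof.
move=> le_k; have le_gk : (size g <= k)%N := leq_trans (leq_addr _ _) le_k.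
by rewrite -(subnKC le_gk) taylor_nilpotent //; lia.
Qed.

Definition taylor_sol : seq (seq R) := seq_of_coef taylor (size g + n) n.

Lemma coef_taylor_sol k i : coef taylor_sol k i = taylor k i.
Proof. exact: coef_seq_of_coef taylor_ge_deg taylor_ge_width k i. Qed.

Lemma taylor_sol_solves : solves A g taylor_sol.
Proof.
move=> k i; rewrite !coef_taylor_sol /=.
rewrite (mulmv_sum _ _ (coef_taylor_sol k) (@taylor_ge_width k)).
by rewrite mulr_natl -(scaler_nat (R := K)) scalerA mulfV ?pnatr_eq0 ?scale1r.
Qed.

End Taylor.

Section LinearCombination.
Variable R : comNzRingType.
Implicit Types (a b : R) (f g : seq (seq R)).

Definition lincomb a b f1 f2 : seq (seq R) :=
  seq_of_coef (fun k i => a * coef f1 k i + b * coef f2 k i)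
    (maxn (size f1) (size f2)) (maxn (width f1) (width f2)).

Lemma coef_lincomb a b f1 f2 k i :
  coef (lincomb a b f1 f2) k i = a * coef f1 k i + b * coef f2 k i.
Proof.
apply: coef_seq_of_coef => {}k {}i; rewrite geq_max => /andP[le1 le2].
  by rewrite !coef_ge_size ?mulr0 ?addr0.
by rewrite !coef_ge_width ?mulr0 ?addr0.
Qed.

Lemma lincomb_solves (A : nat -> nat -> R) a b g1 g2 g3 f1 f2 :
  solves A g1 f1 -> solves A g2 f2 ->
  (forall k i, coef g3 k i = a * coef g1 k i + b * coef g2 k i) ->
  solves A g3 (lincomb a b f1 f2).
Proof.
move=> sol1 sol2 g3E k i; set n := maxn (width f1) (width f2).
have lincomb0 j : (n <= j)%N -> a * coef f1 k j + b * coef f2 k j = 0.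
  by rewrite geq_max => /andP[le1 le2]; rewrite !coef_ge_width ?mulr0 ?addr0.
rewrite !coef_lincomb g3E (mulmv_sum _ _ (coef_lincomb a b f1 f2 k) lincomb0).
rewrite mulrDr [_ * (a * _)]mulrCA [_ * (b * _)]mulrCA sol1 sol2.
rewrite !(mulmv_sum_width _ _ (n := n)) ?leq_maxl ?leq_maxr // !mulrDr !mulr_sumr.
rewrite addrACA -big_split /=; congr (_ + _); apply: eq_bigr => j _; ring.
Qed.

End LinearCombination.

Theorem lemma6p2 (K : realType) (R : comAlgType K)
    (A : nat -> nat -> R) (hA : col_finite A) :
  (* (i) *)
  (unipotent_upper A ->
     (forall g : seq (seq R), exists f, solves A g f) /\
     (forall g f1 f2 : seq (seq R), solves A g f1 -> solves A g f2 -> peq f1 f2) /\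
     (exists sol : seq (seq R) -> seq (seq R),
        (forall g, solves A g (sol g)) /\
        (forall (a b : R) (g1 g2 g3 : seq (seq R)),
           (forall k i, coef g3 k i = a * coef g1 k i + b * coef g2 k i) ->
           forall k i, coef (sol g3) k i = a * coef (sol g1) k i + b * coef (sol g2) k i)))
  /\
  (* (ii) *)
  (strictly_upper A ->
     (forall g f1 f2 : seq (seq R), solves A g f1 -> solves A g f2 ->
        (forall i, coef f1 0 i = coef f2 0 i) -> peq f1 f2) /\
     (exists sol : seq R -> seq (seq R) -> seq (seq R),
        (forall f0 g, solves A g (sol f0 g) /\ forall i, coef (sol f0 g) 0 i = ventry f0 i) /\
        (forall (a b : R) (u1 u2 u3 : seq R) (g1 g2 g3 : seq (seq R)),
           (forall i, ventry u3 i = a * ventry u1 i + b * ventry u2 i) ->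
           (forall k i, coef g3 k i = a * coef g1 k i + b * coef g2 k i) ->
           forall k i, coef (sol u3 g3) k i
                       = a * coef (sol u1 g1) k i + b * coef (sol u2 g2) k i))).
Proof.
split=> [A_unip | A_su].
  have ex_sol g : exists f, solves A g f by exact: unipotent_solves_from A_unip g 0.
  have [sol solP] := choice _ ex_sol.
  split=> //; split; first exact: unipotent_solves_uniq.
  exists sol; split=> // a b g1 g2 g3 g3E k i; rewrite -coef_lincomb.
  apply: unipotent_solves_uniq A_unip _ _ _ (solP g3) _ k i.
  exact: lincomb_solves (solP g1) (solP g2) g3E.
split=> [g f1 f2|]; first exact: solves_uniq_init.
pose sol f0 g := taylor_sol A f0 g.
have solP f0 g : solves A g (sol f0 g) by exact: taylor_sol_solves.
have sol0 f0 g i : coef (sol f0 g) 0 i = ventry f0 i by exact: coef_taylor_sol.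
exists sol; split=> [f0 g | a b u1 u2 u3 g1 g2 g3 u3E g3E k i].
  by split=> [|i]; [exact: solP | exact: sol0].
rewrite -coef_lincomb.
apply: solves_uniq_init (solP u3 g3) (lincomb_solves (solP u1 g1) (solP u2 g2) g3E) _ k i.
by move=> i; rewrite coef_lincomb !sol0 u3E.
Qed.
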